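(* Let $P$ be a nondegenerate polyhedron in $\mathbb{R}^3$ which is the image of a sphere-homeomorphic simplicial complex $K$, which is rigid, and for which there exists a sequence of flexible nondegenerate polyhedra $P_n$, each having the same combinatorial structure as $P$, with $P_n\to P$ as $n\to\infty$. Let $v$ be the number of vertices of $P$. Then there is no algebraic set $A\subset\mathbb{R}^{3v}$ such that $\varphi(F_{[\![P]\!]}) = A\cap\varphi([\![P]\!])$.
   Context: A polyhedron is a continuous mapping from a finite 2-dimensional simplicial complex $K$ into $\mathbb{R}^3$ that is affine on each simplex of $K$. Its vertices, edges and faces are the images of the vertices, edges and 2-simplices of $K$. A polyhedron is nondegenerate if every face is a nondegenerate (non-collinear) triangle. Two nondegenerate polyhedra have the same combinatorial structure if they are mappings from the same simplicial complex. A polyhedron is flexible if it admits a continuous deformation through polyhedra on the same complex keeping every face congruent to itself (all edge lengths preserved) that is not induced by isometries of $\mathbb{R}^3$; otherwise it is rigid. For a nondegenerate polyhedron $Q$ on a complex $K$ with $v$ vertices, $[\![Q]\!]$ denotes the set of all nondegenerate polyhedra with the same combinatorial structure as $Q$. Fixing an enumeration of the vertices of $K$, the map $\varphi:[\![Q]\!]\to\mathbb{R}^{3v}$ sends a polyhedron to the point listing the coordinates of its vertices in this order ($\varphi([\![Q]\!])$ is open in $\mathbb{R}^{3v}$). $F_{[\![Q]\!]}$ denotes the set of flexible polyhedra in $[\![Q]\!]$. Convergence $P_n\to P$ means $\varphi(P_n)\to\varphi(P)$ in $\mathbb{R}^{3v}$. An algebraic set in $\mathbb{R}^{3v}$ is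 the common zero set of a family of real polynomials in $3v$ variables. *)

From HB Require Import structures.
From mathcomp Require Import all_boot all_order all_algebra.
From mathcomp Require Import all_classical all_reals all_analysis.
From mathcomp Require mpoly.
Set Implicit Arguments. Unset Strict Implicit. Unset Printing Implicit Defensive.
Import Order.TTheory GRing.Theory Num.Theory.
Import numFieldNormedType.Exports.
Local Open Scope classical_set_scope.
Local Open Scope ring_scope.

Definition simplicial_complex (v : nat) (K : {set {set 'I_v}}) : Prop :=
  [/\ finset.set0 \notin K,
      (forall i : 'I_v, [set i]%SET \in K),
      (forall s : {set 'I_v}, s \in K -> (#|s| <= 3)%N) &
      (forall s t : {set 'I_v}, s \in K -> t \subset s -> t != finset.set0 -> t \in K)].

Definition is_edge (v : nat) (K : {set {set 'I_v}}) (a b : 'I_v) : Prop :=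
  a != b /\ [set a; b]%SET \in K.
Definition is_face (v : nat) (K : {set {set 'I_v}}) (a b c : 'I_v) : Prop :=
  [/\ a != b, b != c, a != c & [set a; b; c]%SET \in K].

(* Geometric realization |K| inside the standard simplex of R^v. *)
Definition realization (R : realType) (v : nat) (K : {set {set 'I_v}})
  : set 'rV[R]_v :=
  [set x | (forall i, 0 <= x 0 i) /\ \sum_i x 0 i = 1 /\
           [set i | x 0 i != 0]%SET \in K].

Definition sqdist (R : realType) (x y : 'rV[R]_3) : R :=
  \sum_(j < 3) (x 0 j - y 0 j) ^+ 2.
Definition sphere2 (R : realType) : set 'rV[R]_3 :=
  [set y | sqdist y 0 = 1].

Definition homeomorphic (T U : topologicalType) (A : set T) (B : set U) : Prop :=
  exists (f : T -> U) (g : U -> T),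
    [/\ (forall x, A x -> B (f x)), (forall y, B y -> A (g y)),
        (forall x, A x -> g (f x) = x), (forall y, B y -> f (g y) = y) &
        ({within A, continuous f} /\ {within B, continuous g})].

Definition sphere_homeomorphic (R : realType) (v : nat)
  (K : {set {set 'I_v}}) : Prop :=
  homeomorphic (@realization R v K) (@sphere2 R).

(* A polyhedron on K is determined by (and identified with) the positions of
   its vertices: row i of p : 'M_(v,3) is the image of vertex i.  The map
   phi of the paper is mxvec, giving (x_1,y_1,z_1,x_2,...) in R^(3v). *)
Definition vert (R : realType) (v : nat) (p : 'M[R]_(v, 3)) (i : 'I_v)
  : 'rV[R]_3 := row i p.

Definition phi (R : realType) (v : nat) (p : 'M[R]_(v, 3)) : 'rV[R]_(v * 3) :=
  mxvec p.

Definition collinear (R : realType) (x y z : 'rV[R]_3) : Prop :=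
  exists (q d : 'rV[R]_3) (tx ty tz : R),
    [/\ x = q + tx *: d, y = q + ty *: d & z = q + tz *: d].

Definition nondegenerate_poly (R : realType) (v : nat) (K : {set {set 'I_v}})
  (p : 'M[R]_(v, 3)) : Prop :=
  forall a b c, is_face K a b c -> ~ collinear (vert p a) (vert p b) (vert p c).

Definition isometry3 (R : realType) (g : 'rV[R]_3 -> 'rV[R]_3) : Prop :=
  forall x y, sqdist (g x) (g y) = sqdist x y.

Definition flexible (R : realType) (v : nat) (K : {set {set 'I_v}})
  (p : 'M[R]_(v, 3)) : Prop :=
  exists f : R -> 'M[R]_(v, 3),
    [/\ f 0 = p,
        {within `[0, 1], continuous f},
        (forall t, t \in `[0, 1] -> forall a b, is_edge K a b ->
            sqdist (vert (f t) a) (vert (f t) b) = sqdist (vert p a) (vert p b)) &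
        ~ (forall t, t \in `[0, 1] -> exists g, isometry3 g /\
              forall i, vert (f t) i = g (vert p i))].

Definition rigid (R : realType) (v : nat) (K : {set {set 'I_v}})
  (p : 'M[R]_(v, 3)) : Prop := ~ flexible K p.

(* [[Q]] : nondegenerate_poly polyhedra on K, and F_[[Q]] : the flexible ones. *)
Definition same_structure (R : realType) (v : nat) (K : {set {set 'I_v}})
  : set 'M[R]_(v, 3) := [set q | nondegenerate_poly K q].
Definition flexible_class (R : realType) (v : nat) (K : {set {set 'I_v}})
  : set 'M[R]_(v, 3) := [set q | nondegenerate_poly K q /\ flexible K q].

Definition algebraic_set (R : realType) (n : nat) (A : set 'rV[R]_n) : Prop :=
  exists S : set (mpoly.mpoly n R),
    A = [set x | forall P, S P -> mpoly.meval (fun i => x 0 i) P = 0].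

(** Polynomials are continuous, so algebraic sets are closed.  If the
    flexible polyhedra were cut out of [[P]] by an algebraic set, they would
    form a relatively closed subset of [[P]]; the limit P of the flexible
    polyhedra P_n would then be flexible, contradicting its rigidity. *)
From HB Require Import structures.
From mathcomp Require Import all_boot all_order all_algebra.
From mathcomp Require Import all_classical all_reals all_analysis.
From mathcomp Require mpoly.
Set Implicit Arguments. Unset Strict Implicit. Unset Printing Implicit Defensive.
Import Order.TTheory GRing.Theory Num.Theory.
Import numFieldNormedType.Exports.
Local Open Scope classical_set_scope.
Local Open Scope ring_scope.

Lemma meval_continuous (R : realType) (n : nat) (Q : mpoly.mpoly n R) :
  continuous (fun x : 'rV[R]_n => mpoly.meval (fun i => x 0 i) Q).
Proof.
move=> x; rewrite /continuous_at mpoly.mevalE.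
under eq_fun do rewrite mpoly.mevalE.
apply: (@cvg_big _ _ +%R 0 xpredT add_continuous); [exact: nbhs_filter | move=> m _].
apply: (@cvgM _ _ (nbhs x) _ (fun=> _)); first exact: cvg_cst.
apply: cvg_big; [exact: mul_continuous | move=> i _].
have xi : {for x, continuous (fun y : 'rV[R]_n => y 0 i)} by exact: coord_continuous.
exact: (continuous_comp xi (@exprn_continuous R _ _)).
Qed.

Lemma algebraic_set_closed (R : realType) (n : nat) (A : set 'rV[R]_n) :
  algebraic_set A -> closed A.
Proof.
move=> [S AE].
have -> : A = \bigcap_(Q in S)
    ((fun x : 'rV[R]_n => mpoly.meval (fun i => x 0 i) Q) @^-1` [set 0]).
  by rewrite AE; apply/seteqP; split=> x /= xS Q SQ; apply: xS.
apply: closed_bigI => Q _.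
apply: preimage_closed; first by move=> x _; exact: meval_continuous.
exact: closed_eq.
Qed.

Lemma mem_closed_trace_cvg (T : Type) (U : topologicalType) (f : T -> U)
    (X Y : set T) (A : set U) (u : nat -> T) (p : T) :
  injective f -> closed A -> f @` X = A `&` f @` Y ->
  (forall k, X (u k)) -> f (u k) @[k --> \oo] --> f p -> Y p -> X p.
Proof.
move=> f_inj cA XE Xu fu_p Yp.
have fX_A y : (f @` X) y -> A y by rewrite XE => -[].
have Afp : A (f p).
  by apply: (closed_cvg _ cA _ _ fu_p); near=> k; apply: fX_A; exact: imageP.
have : (f @` X) (f p) by rewrite XE; split=> //; exists p.
by case=> q Xq /f_inj <-.
Unshelve. all: end_near.
Qed.

Theorem theorem2 (R : realType) (v : nat) (K : {set {set 'I_v}})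
  (P : 'M[R]_(v, 3)) (Pn : nat -> 'M[R]_(v, 3)) :
  simplicial_complex K ->
  sphere_homeomorphic R K ->
  nondegenerate_poly K P ->
  rigid K P ->
  (forall n, nondegenerate_poly K (Pn n) /\ flexible K (Pn n)) ->
  (fun n => phi (Pn n)) @ \oo --> phi P ->
  ~ exists A : set 'rV[R]_(v * 3),
      algebraic_set A /\
      (@phi R v) @` @flexible_class R v K = A `&` (@phi R v) @` @same_structure R v K.
Proof.
move=> _ _ ndP rigP flexPn Pn_P [A [algA flexE]].
have phi_inj : injective (@phi R v) := can_inj (@mxvecK _ _ _).
have [_ flexP] :=
  mem_closed_trace_cvg phi_inj (algebraic_set_closed algA) flexE flexPn Pn_P ndP.
exact: rigP.
Qed.
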